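(* Let $\mathcal{X}$ be a finite set and $\pi$ a probability mass function on $\mathcal{X}$ with full support. Let groups $\mathcal{G}_1,\mathcal{G}_2$ act on $\mathcal{X}$ with orbits $(\mathcal{O}_i)_{i=1}^{k_1}$ and $(\mathcal{C}_j)_{j=1}^{k_2}$, Gibbs orbit kernels $G_1,G_2$, and let $S_1,S_2\subseteq\ell^2(\pi)$ be the subspaces onto which $G_1,G_2$ project. Let $T$ be the $k_2\times k_1$ matrix $T(j,i)=\pi(\mathcal{O}_i\cap\mathcal{C}_j)/\sqrt{\pi(\mathcal{O}_i)\pi(\mathcal{C}_j)}$. Then the cosine $c(S_1,S_2)=\sigma_2(T)$, the largest singular value of $T$ less than $1$. If all singular values of $T$ are $1$, then $c(S_1,S_2)=0$ and $G_1G_2=G_2G_1=G_\infty$.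
   Context: $\ell^2(\pi)$ has inner product $\langle f,g\rangle_\pi=\sum_xf(x)g(x)\pi(x)$; $\pi(A)=\sum_{z\in A}\pi(z)$. The Gibbs kernel of a group action with orbit $\mathcal{O}(x)$ of $x$ is $G(x,y)=\pi(y)/\pi(\mathcal{O}(x))$ for $y\in\mathcal{O}(x)$ and $0$ otherwise; it is the $\ell^2(\pi)$-orthogonal projection onto the functions constant on each orbit. $G_\infty$ denotes the orthogonal projection onto $S_1\cap S_2$. The cosine is $c(S_1,S_2)=\sup\{\langle f,h\rangle_\pi: f\in S_1\cap(S_1\cap S_2)^\perp,\ h\in S_2\cap(S_1\cap S_2)^\perp,\ \|f\|_\pi,\|h\|_\pi\le1\}$, which equals the operator norm $\|G_1G_2-G_\infty\|_{\ell^2(\pi)\to\ell^2(\pi)}$. Singular values of $T$ are listed in non-increasing order $\sigma_1(T)\ge\sigma_2(T)\ge\cdots$. *)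

From HB Require Import structures.
From mathcomp Require Import all_boot all_order all_algebra all_fingroup.
From mathcomp Require Import boolp classical_sets reals.
Set Implicit Arguments.
Unset Strict Implicit.
Unset Printing Implicit Defensive.
Import Order.TTheory GRing.Theory Num.Theory.
Local Open Scope ring_scope.
Local Open Scope classical_set_scope.

Definition piA (R : realType) (X : finType) (pi : X -> R) (A : {set X}) : R :=
  \sum_(z in A) pi z.

Definition inner (R : realType) (X : finType) (pi : X -> R) (f g : X -> R) : R :=
  \sum_x f x * g x * pi x.

Definition normpi (R : realType) (X : finType) (pi : X -> R) (f : X -> R) : R :=
  Num.sqrt (inner pi f f).

Definition orb (gT : finGroupType) (X : finType) (to : {action gT &-> X}) (x : X)
  : {set X} := orbit to [set: gT]%SET x.

Definition orbits (gT : finGroupType) (X : finType) (to : {action gT &-> X})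
  : {set {set X}} := orb to @: [set: X]%SET.

Definition gibbs (R : realType) (X : finType) (pi : X -> R)
  (gT : finGroupType) (to : {action gT &-> X}) (x y : X) : R :=
  if y \in orb to x then pi y / piA pi (orb to x) else 0.

Definition kop (R : realType) (X : finType) (K : X -> X -> R) (f : X -> R) : X -> R :=
  fun x => \sum_y K x y * f y.

Definition range_sp (R : realType) (X : finType) (K : X -> X -> R) : set (X -> R) :=
  [set f | exists g, f = kop K g].

Definition orth (R : realType) (X : finType) (pi : X -> R) (S : set (X -> R))
  : set (X -> R) := [set f | forall g, S g -> inner pi f g = 0].

Definition is_orth_proj (R : realType) (X : finType) (pi : X -> R)
  (S : set (X -> R)) (P : (X -> R) -> (X -> R)) : Prop :=
  forall f, S (P f) /\ orth pi S (fun x => f x - P f x).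

Definition cosine (R : realType) (X : finType) (pi : X -> R) (S1 S2 : set (X -> R)) : R :=
  sup [set r | exists f h,
        (S1 `&` orth pi (S1 `&` S2)) f /\ (S2 `&` orth pi (S1 `&` S2)) h /\
        normpi pi f <= 1 /\ normpi pi h <= 1 /\ r = inner pi f h].

Definition Tmat (R : realType) (X : finType) (pi : X -> R)
  (gT1 gT2 : finGroupType) (to1 : {action gT1 &-> X}) (to2 : {action gT2 &-> X})
  : 'M[R]_(#|orbits to2|, #|orbits to1|) :=
  \matrix_(j, i)
    (let O := @enum_val _ (mem (orbits to1)) i in
     let C := @enum_val _ (mem (orbits to2)) j in
     piA pi (O :&: C) / Num.sqrt (piA pi O * piA pi C)).

(* s is a singular value of T (the min(m,n) singular values convention):
   s >= 0 and s^2 is an eigenvalue of both T T^T and T^T T. *)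
Definition singval (R : realType) (m n : nat) (T : 'M[R]_(m, n)) (s : R) : Prop :=
  0 <= s /\ eigenvalue (T *m T^T) (s ^+ 2) /\ eigenvalue (T^T *m T) (s ^+ 2).

(* Let [e_i = 1_{O_i} / sqrt (pi O_i)] and [u_j = 1_{C_j} / sqrt (pi C_j)]. These
   are orthonormal bases of [S1] and [S2], the Gibbs kernels act as the orthogonal
   projections [f |-> sum_i <f, e_i> e_i], and [T] is the cross Gram matrix
   [<e_i, u_j>]. For [f = sum_i a_i e_i] in [S1] one has [|G2 f|^2 = a T^T T a^T],
   and the eigenvectors of [T^T T] for the eigenvalue 1 are the coordinates of the
   elements of [S1 :&: S2]. So for [f] in [S1] orthogonal to [S1 :&: S2] and [h] in
   [S2], [<f, h> = <G2 f, h> <= |G2 f| |h|] is bounded by [sigma_2], by the Rayleigh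
   quotient of the symmetric matrix [T^T T] on the orthogonal complement of its
   1-eigenspace; an eigenvector for [sigma_2^2] attains the bound. If all singular
   values are 1 then, after exchanging the two actions if [T^T T] is singular, every
   eigenvalue of [T^T T] is 1, so [G2] is isometric on [S1], i.e. [S1 <= S2], and
   then [G1 G2 = G2 G1 = G1 = G_inf]. *)

From Pilot Require Import Defs.
From HB Require Import structures.
From mathcomp Require Import all_boot all_order all_algebra all_fingroup.
From mathcomp Require Import boolp classical_sets reals complex.
From mathcomp Require Import ring lra.
Import Order.TTheory GRing.Theory Num.Theory.
Set Implicit Arguments.
Unset Strict Implicit.
Unset Printing Implicit Defensive.
Local Open Scope ring_scope.

Section RowDot.
Variable R : realType.

Definition rdot n (u v : 'rV[R]_n) : R := (u *m v^T) 0 0.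

Lemma rdotE n (u v : 'rV[R]_n) : rdot u v = \sum_i u 0 i * v 0 i.
Proof. by rewrite /rdot mxE; apply: eq_bigr => i _; rewrite mxE. Qed.

Lemma rdotC n (u v : 'rV[R]_n) : rdot u v = rdot v u.
Proof. by rewrite !rdotE; apply: eq_bigr => i _; rewrite mulrC. Qed.

Lemma rdotDl n (u v w : 'rV[R]_n) : rdot (u + v) w = rdot u w + rdot v w.
Proof. by rewrite /rdot mulmxDl mxE. Qed.

Lemma rdotZl n a (u w : 'rV[R]_n) : rdot (a *: u) w = a * rdot u w.
Proof. by rewrite /rdot -scalemxAl mxE. Qed.

Lemma rdotNl n (u w : 'rV[R]_n) : rdot (- u) w = - rdot u w.
Proof. by rewrite /rdot mulNmx mxE. Qed.

Lemma rdot0l n (w : 'rV[R]_n) : rdot 0 w = 0.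
Proof. by rewrite /rdot mul0mx mxE. Qed.

Lemma rdotDr n (u v w : 'rV[R]_n) : rdot w (u + v) = rdot w u + rdot w v.
Proof. by rewrite rdotC rdotDl !(rdotC w). Qed.

Lemma rdotZr n a (u w : 'rV[R]_n) : rdot w (a *: u) = a * rdot w u.
Proof. by rewrite rdotC rdotZl rdotC. Qed.

Lemma rdot_mulmx m n (u : 'rV[R]_m) (A : 'M[R]_(m, n)) v :
  rdot (u *m A) v = rdot u (v *m A^T).
Proof. by rewrite /rdot trmx_mul trmxK mulmxA. Qed.

Lemma sub_kermx_rdot n (u v : 'rV[R]_n) : (u <= kermx v^T)%MS = (rdot u v == 0).
Proof.
rewrite sub_kermx; apply/eqP/eqP => [uv0 | uv]; first by rewrite /rdot uv0 mxE.
by rewrite [LHS]mx11_scalar -/(rdot u v) uv raddf0.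
Qed.

Lemma rdot_ge0 n (u : 'rV[R]_n) : 0 <= rdot u u.
Proof. by rewrite rdotE sumr_ge0 // => i _; rewrite -expr2 sqr_ge0. Qed.

Lemma rdot_eq0 n (u : 'rV[R]_n) : (rdot u u == 0) = (u == 0).
Proof.
apply/idP/eqP => [|->]; last by rewrite rdot0l.
rewrite rdotE psumr_eq0 => [/allP u0|i _]; last by rewrite -expr2 sqr_ge0.
apply/rowP => i; rewrite mxE; apply/eqP.
by have := u0 i (mem_index_enum _); rewrite mulf_eq0 orbb.
Qed.

Lemma rdot_gt0 n (u : 'rV[R]_n) : (0 < rdot u u) = (u != 0).
Proof. by rewrite lt_def rdot_eq0 rdot_ge0 andbT. Qed.

Lemma sub_kermx_tr_eq0 m n (A : 'M[R]_(m, n)) (v : 'rV[R]_n) :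
  (v <= A)%MS -> (v <= kermx A^T)%MS -> v = 0.
Proof.
move=> /submxP[D ->]; rewrite sub_kermx => /eqP DA.
by apply/eqP; rewrite -rdot_eq0 /rdot trmx_mul mulmxA DA mul0mx mxE.
Qed.

End RowDot.

Lemma complex_ReM (R : rcfType) (x y : R[i]) :
  complex.Re (x * y) = complex.Re x * complex.Re y - complex.Im x * complex.Im y.
Proof. by case: x => a b; case: y => c d; simpc. Qed.

Lemma complex_ImM (R : rcfType) (x y : R[i]) :
  complex.Im (x * y) = complex.Re x * complex.Im y + complex.Im x * complex.Re y.
Proof. by case: x => a b; case: y => c d; simpc. Qed.

Section SymmetricEigen.
Variables (R : realType) (n : nat) (B : 'M[R]_n).
Hypothesis Bsym : B^T = B.

Lemma rdot_symmetric (u v : 'rV[R]_n) : rdot (u *m B) v = rdot u (v *m B).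
Proof. by rewrite rdot_mulmx Bsym. Qed.

Lemma stablemx_kermx_eigenspace lam : stablemx (kermx (eigenspace B lam)^T) B.
Proof.
set E := eigenspace B lam.
have /eigenspaceP EB := submx_refl E.
have BE : B *m E^T = lam *: E^T by rewrite -[B]Bsym -trmx_mul EB linearZ.
by rewrite sub_kermx -mulmxA BE -scalemxAr mulmx_ker scaler0.
Qed.

(* The real and imaginary parts [a], [b] of a complex eigenvector of [B] for
   [x + i w] satisfy [a B = x a - w b] and [b B = x b + w a]; symmetry of [B]
   then forces [w (|a|^2 + |b|^2) = 0]. *)
Lemma symmetric_stable_eigenvector m (W : 'M[R]_(m, n)) :
  stablemx W B -> W != 0 ->
  exists v : 'rV_n, exists lam : R, [/\ (v <= W)%MS, v != 0 & v *m B = lam *: v].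
Proof.
move=> WB W0; pose V := row_base W; pose M := restrictmx W B.
have rkW : (0 < \rank W)%N by rewrite lt0n mxrank_eq0.
have MV : M *m V = V *m B by rewrite mulmxKpV // (eqmx_stable _ (eq_row_base W)).
have [z /eigenvalueP [y yM y0]] := eigenvalue_closed (map_mx (real_complex R) M) rkW.
pose x := complex.Re z; pose w := complex.Im z.
pose yr := map_mx (@complex.Re R) y; pose yi := map_mx (@complex.Im R) y.
have yrM : yr *m M = x *: yr - w *: yi.
  apply/rowP => j; have /(congr1 (fun A : 'rV_(\rank W) => complex.Re (A 0 j))) := yM.
  rewrite !mxE raddf_sum complex_ReM => <-; apply: eq_bigr => k _.
  by rewrite !mxE /= complex_ReM /= mulr0 subr0.
have yiM : yi *m M = x *: yi + w *: yr.
  apply/rowP => j; have /(congr1 (fun A : 'rV_(\rank W) => complex.Im (A 0 j))) := yM.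
  rewrite !mxE raddf_sum complex_ImM => <-; apply: eq_bigr => k _.
  by rewrite !mxE /= complex_ImM /= mulr0 add0r.
pose a := yr *m V; pose b := yi *m V.
have aB : a *m B = x *: a - w *: b by rewrite -mulmxA -MV mulmxA yrM mulmxBl !scalemxAl.
have bB : b *m B = x *: b + w *: a by rewrite -mulmxA -MV mulmxA yiM mulmxDl !scalemxAl.
have ab0 : (a != 0) || (b != 0).
  rewrite !mulmx_free_eq0 ?row_base_free //; apply: contraR y0.
  rewrite negb_or !negbK => /andP[/eqP yr0 /eqP yi0]; apply/eqP/rowP => j.
  have /rowP/(_ j) := yr0; have /rowP/(_ j) := yi0; rewrite !mxE.
  by case: (y 0 j) => p q /= -> ->.
have ab_gt0 : 0 < rdot a a + rdot b b.
  case/orP: ab0; rewrite -rdot_gt0 => ?.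
    by rewrite ltr_pwDl ?rdot_ge0.
  by rewrite ltr_wpDl ?rdot_ge0.
have w0 : w = 0.
  have := rdot_symmetric a b.
  rewrite aB bB rdotDl rdotNl rdotDr !rdotZl !rdotZr => sym_ab.
  have : w * (rdot a a + rdot b b) = 0 by rewrite mulrDr; lra.
  by move/eqP; rewrite mulf_eq0 (gt_eqF ab_gt0) orbF => /eqP.
move: aB bB; rewrite w0 !scale0r subr0 addr0 => aB bB.
have VW : (V <= W)%MS by rewrite eq_row_base.
case/orP: ab0 => ?; [exists a, x | exists b, x]; split => //; exact: mulmx_sub.
Qed.

(* Induction on the rank of [W]: split off an eigenvector [v] of [B] in [W];
   the rest of [W] orthogonal to [v] is again [B]-stable. *)
Lemma stable_rayleigh_le (mu : R) m (W : 'M[R]_(m, n)) :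
  stablemx W B ->
  (forall (v : 'rV_n) lam, (v <= W)%MS -> v != 0 -> v *m B = lam *: v -> lam <= mu) ->
  forall x, (x <= W)%MS -> rdot (x *m B) x <= mu * rdot x x.
Proof.
have [k] := ubnP (\rank W); elim: k m W => // k IH m W rkW WB Wmu x xW.
have [W0|W0] := eqVneq W 0.
  by move: xW; rewrite W0 => /submx0null ->; rewrite mul0mx !rdot0l mulr0.
have [v [lam [vW v0 vB]]] := symmetric_stable_eigenvector WB W0.
have vv : 0 < rdot v v by rewrite rdot_gt0.
pose W' := (W :&: kermx v^T)%MS.
have W'W : (W' <= W)%MS := capmxSl _ _.
have W'v u : (u <= W')%MS -> rdot u v = 0.
  by move/submx_trans/(_ (capmxSr _ _)); rewrite sub_kermx_rdot => /eqP.
have rkW' : (\rank W' < k)%N.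
  rewrite -ltnS (leq_trans _ rkW) // ltnS; apply: rank_ltmx; rewrite ltmxE W'W /=.
  by apply: contraL vv => /(submx_trans vW)/W'v ->; rewrite ltxx.
have W'B : stablemx W' B.
  rewrite sub_capmx (submx_trans (submxMr _ W'W) WB) sub_kermx /=.
  rewrite -mulmxA -{1}Bsym -trmx_mul vB linearZ /= -scalemxAr.
  by have := capmxSr W (kermx v^T); rewrite sub_kermx => /eqP ->; rewrite scaler0.
have [al [x' [x'W' ->]]] : exists al x', (x' <= W')%MS /\ x = x' + al *: v.
  exists (rdot x v / rdot v v), (x - (rdot x v / rdot v v) *: v).
  rewrite subrK sub_capmx addmx_sub ?eqmx_opp ?scalemx_sub //= sub_kermx_rdot.
  by rewrite rdotDl rdotNl rdotZl mulfVK ?subrr // gt_eqF.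
have x'B := IH _ _ rkW' W'B (fun u lam' uW' => Wmu u lam' (submx_trans uW' W'W)) _ x'W'.
have lam_mu : lam <= mu := Wmu _ _ vW v0 vB.
have x'v := W'v _ x'W'.
have x'Bv : rdot (x' *m B) v = 0 by rewrite rdot_symmetric vB rdotZr x'v mulr0.
rewrite mulmxDl -scalemxAl vB !rdotDl !rdotDr !rdotZl !rdotZr x'Bv (rdotC v x') x'v.
have : 0 <= al ^+ 2 * rdot v v by rewrite mulr_ge0 ?sqr_ge0 ?rdot_ge0.
nra.
Qed.

End SymmetricEigen.

Local Open Scope classical_set_scope.

Lemma sup_eq_max (R : realType) (E : set R) s :
  E s -> (forall r, E r -> r <= s) -> sup E = s.
Proof.
move=> Es ub; apply/le_anti; rewrite sup_upper_bound ?andbT //; last first.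
  by split; [exists s | exists s => r /ub].
by apply: ge_sup; [exists s | move=> r /ub].
Qed.

Section InnerProduct.
Variables (R : realType) (X : finType) (pi : X -> R).
Hypothesis pi_gt0 : forall x, 0 < pi x.
Local Notation inner := (inner pi).
Implicit Types (f g h : X -> R).

Lemma innerC f g : inner f g = inner g f.
Proof. by apply: eq_bigr => x _; rewrite [f x * _]mulrC. Qed.

Lemma inner_suml I (r : seq I) (P : pred I) (F : I -> X -> R) g :
  inner (fun x => \sum_(i <- r | P i) F i x) g = \sum_(i <- r | P i) inner (F i) g.
Proof.
rewrite /Defs.inner exchange_big /=; apply: eq_bigr => x _.
by rewrite !mulr_suml.
Qed.

Lemma innerZl a f g : inner (fun x => a * f x) g = a * inner f g.
Proof. by rewrite /Defs.inner mulr_sumr; apply: eq_bigr => x _; rewrite !mulrA. Qed.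

Lemma innerZr a f g : inner f (fun x => a * g x) = a * inner f g.
Proof. by rewrite innerC innerZl innerC. Qed.

Lemma innerBl f f' g : inner (fun x => f x - f' x) g = inner f g - inner f' g.
Proof. by rewrite /Defs.inner -sumrB; apply: eq_bigr => x _; rewrite !mulrBl. Qed.

Lemma innerBr f g g' : inner f (fun x => g x - g' x) = inner f g - inner f g'.
Proof. by rewrite innerC innerBl !(innerC f). Qed.

Lemma inner0l g : inner (fun _ => 0) g = 0.
Proof. by rewrite /Defs.inner big1 // => x _; rewrite !mul0r. Qed.

Lemma inner0r f : inner f (fun _ => 0) = 0.
Proof. by rewrite innerC inner0l. Qed.

Lemma inner_ge0 f : 0 <= inner f f.
Proof. by rewrite sumr_ge0 // => x _; apply: mulr_ge0; [exact: sqr_ge0 | exact: ltW]. Qed.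

Lemma inner_eq0 f : inner f f = 0 -> f = (fun _ => 0).
Proof.
move=> /eqP; rewrite psumr_eq0 => [/allP f0|x _]; last first.
  by apply: mulr_ge0; [exact: sqr_ge0 | exact: ltW].
apply: funext => x; have := f0 x (mem_index_enum _).
by rewrite mulf_eq0 (gt_eqF (pi_gt0 x)) orbF mulf_eq0 orbb => /eqP.
Qed.

Lemma inner_subr_eq0 f f' : inner (fun x => f x - f' x) (fun x => f x - f' x) = 0 -> f = f'.
Proof.
move/inner_eq0 => ff'; apply: funext => x.
by apply/eqP; rewrite -subr_eq0; have /(congr1 (@^~ x)) /= -> := ff'.
Qed.

Lemma inner_ext f f' : (forall g, inner f g = inner f' g) -> f = f'.
Proof. by move=> ff'; apply: inner_subr_eq0; rewrite innerBl !ff' subrr. Qed.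

Lemma inner_cauchy_schwarz f g : inner f g ^+ 2 <= inner f f * inner g g.
Proof.
have [g0|gg_neq0] := eqVneq (inner g g) 0.
  by rewrite g0 mulr0 (inner_eq0 g0) inner0r expr0n.
have gg_gt0 : 0 < inner g g by rewrite lt_def gg_neq0 inner_ge0.
pose c := inner f g / inner g g.
have cg : c * inner g g = inner f g by rewrite mulfVK.
have := inner_ge0 (fun x => f x - c * g x).
rewrite innerBl !innerBr !innerZl !innerZr (innerC g f) cg => fcg.
have := mulr_ge0 fcg (ltW gg_gt0).
by rewrite subrr subr0 mulrBl mulrAC cg -expr2 subr_ge0.
Qed.

Lemma normpi_le1 f : (normpi pi f <= 1) = (inner f f <= 1).
Proof. by rewrite /normpi -sqrtr1 ler_sqrt // sqrtr1. Qed.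

Definition cosine_pair (S1 S2 : set (X -> R)) f h :=
  [/\ (S1 `&` orth pi (S1 `&` S2)) f, (S2 `&` orth pi (S1 `&` S2)) h,
      normpi pi f <= 1 & normpi pi h <= 1].

Lemma cosine_eq_max S1 S2 c f h :
  cosine_pair S1 S2 f h -> inner f h = c ->
  (forall f' h', cosine_pair S1 S2 f' h' -> inner f' h' <= c) ->
  cosine pi S1 S2 = c.
Proof.
move=> [fS hS nf nh] fhc ub; apply: sup_eq_max; first by exists f, h.
by move=> _ [f' [h' [f'S [h'S [nf' [nh' ->]]]]]]; apply: ub.
Qed.

Lemma cosine_pair0 (S1 S2 : set (X -> R)) :
  S1 (fun _ => 0) -> S2 (fun _ => 0) -> cosine_pair S1 S2 (fun _ => 0) (fun _ => 0).
Proof.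
by move=> S10 S20; split; try split=> // g _; rewrite ?normpi_le1 inner0l ?ler01.
Qed.

Lemma cosineC S1 S2 : cosine pi S1 S2 = cosine pi S2 S1.
Proof.
rewrite /cosine [S2 `&` S1]setIC; congr sup; apply/funext => r; apply/propext.
split=> -[f [h [fS [hS [nf [nh ->]]]]]]; exists h, f;
  exact: (conj hS (conj fS (conj nh (conj nf (innerC _ _))))).
Qed.

Lemma cosine_eq0_sub (S1 S2 : set (X -> R)) :
  S1 (fun _ => 0) -> S2 (fun _ => 0) -> S1 `<=` S2 -> cosine pi S1 S2 = 0.
Proof.
move=> S10 S20 S12; apply: cosine_eq_max (cosine_pair0 S10 S20) (inner0l _) _.
move=> f h [[fS1 fo] _ _ _].
by rewrite (inner_eq0 (fo f (conj fS1 (S12 f fS1)))) inner0l.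
Qed.

End InnerProduct.

Section OrthonormalFamily.
Variables (R : realType) (X : finType) (pi : X -> R) (k : nat) (e : 'I_k -> X -> R).
Local Notation inner := (inner pi).
Implicit Types (f g : X -> R) (a b : 'rV[R]_k).

Definition lincomb a : X -> R := fun x => \sum_i a 0 i * e i x.
Definition coords f : 'rV[R]_k := \row_i inner f (e i).
Definition oproj f : X -> R := lincomb (coords f).
Definition lspan : set (X -> R) := [set f | exists g, f = oproj g].

Lemma inner_lincombl a g : inner (lincomb a) g = \sum_i a 0 i * inner (e i) g.
Proof. by rewrite inner_suml; apply: eq_bigr => i _; rewrite innerZl. Qed.

Lemma lincombZ c a : lincomb (c *: a) = (fun x => c * lincomb a x).
Proof.
by apply: funext => x; rewrite mulr_sumr; apply: eq_bigr => i _; rewrite mxE mulrA.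
Qed.

Lemma lincomb0 : lincomb 0 = (fun _ => 0).
Proof. by apply: funext => x; rewrite /lincomb big1 // => i _; rewrite mxE mul0r. Qed.

Lemma coords0 : coords (fun _ => 0) = 0.
Proof. by apply/rowP => i; rewrite !mxE inner0l. Qed.

Lemma lspan0 : lspan (fun _ => 0).
Proof. by exists (fun _ => 0); rewrite /oproj coords0 lincomb0. Qed.

Lemma inner_oprojl f g : inner (oproj f) g = rdot (coords f) (coords g).
Proof.
by rewrite inner_lincombl rdotE; apply: eq_bigr => i _; rewrite !mxE (innerC pi (e i) g).
Qed.

Lemma oproj_sym f g : inner (oproj f) g = inner f (oproj g).
Proof. by rewrite inner_oprojl innerC inner_oprojl rdotC. Qed.

Hypothesis e_orthonormal : forall i j, inner (e i) (e j) = (i == j)%:R.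

Lemma coords_lincomb a : coords (lincomb a) = a.
Proof.
apply/rowP => j; rewrite mxE inner_lincombl (bigD1 j) //= e_orthonormal eqxx mulr1.
by rewrite big1 ?addr0 // => i /negbTE ij; rewrite e_orthonormal ij mulr0.
Qed.

Lemma oproj_lincomb a : oproj (lincomb a) = lincomb a.
Proof. by rewrite /oproj coords_lincomb. Qed.

Lemma inner_lincomb a b : inner (lincomb a) (lincomb b) = rdot a b.
Proof.
rewrite -[in RHS](coords_lincomb a) -[in RHS](coords_lincomb b).
by rewrite -inner_oprojl oproj_lincomb.
Qed.

Lemma lspan_lincomb a : lspan (lincomb a).
Proof. by exists (lincomb a); rewrite oproj_lincomb. Qed.

Lemma lspan_oproj f : lspan (oproj f).
Proof. exact: lspan_lincomb. Qed.

Lemma oproj_id f : lspan f -> oproj f = f.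
Proof. by case=> g ->; rewrite oproj_lincomb. Qed.

Lemma inner_sub_oproj f :
  inner (fun x => f x - oproj f x) (fun x => f x - oproj f x) =
  inner f f - inner (oproj f) (oproj f).
Proof.
have Pff : inner (oproj f) (oproj f) = inner f (oproj f).
  by rewrite oproj_sym (oproj_id (lspan_oproj f)).
by rewrite innerBl !innerBr (innerC pi (oproj f) f) Pff; ring.
Qed.

Hypothesis pi_gt0 : forall x, 0 < pi x.

Lemma bessel f : inner (oproj f) (oproj f) <= inner f f.
Proof. by rewrite -subr_ge0 -inner_sub_oproj; exact: inner_ge0. Qed.

Lemma oproj_eq_norm f : inner (oproj f) (oproj f) = inner f f -> oproj f = f.
Proof.
by move=> eqn; apply/esym/inner_subr_eq0 => //; rewrite inner_sub_oproj eqn subrr.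
Qed.

Lemma oproj_unique (G : (X -> R) -> (X -> R)) :
  is_orth_proj pi lspan G -> forall f, G f = oproj f.
Proof.
move=> PG f; have [Gf fGf] := PG f.
have dS g : lspan g -> inner (fun x => G f x - oproj f x) g = 0.
  move=> gS; have := fGf g gS; rewrite !innerBl oproj_sym (oproj_id gS).
  by move/eqP; rewrite subr_eq0 => /eqP ->; rewrite subrr.
apply: inner_subr_eq0 => //.
by rewrite innerBr !dS ?subrr //; exact: lspan_oproj.
Qed.

End OrthonormalFamily.

Definition gram (R : realType) (X : finType) (pi : X -> R) k1 k2
  (e : 'I_k1 -> X -> R) (u : 'I_k2 -> X -> R) : 'M[R]_(k2, k1) :=
  \matrix_(j, i) inner pi (e i) (u j).

Lemma gram_tr (R : realType) (X : finType) (pi : X -> R) k1 k2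
  (e : 'I_k1 -> X -> R) (u : 'I_k2 -> X -> R) : gram pi u e = (gram pi e u)^T.
Proof. by apply/matrixP => i j; rewrite !mxE innerC. Qed.

Lemma coords_lincomb_gram (R : realType) (X : finType) (pi : X -> R) k1 k2
  (e : 'I_k1 -> X -> R) (u : 'I_k2 -> X -> R) a :
  coords pi u (lincomb e a) = a *m (gram pi e u)^T.
Proof.
by apply/rowP => j; rewrite !mxE inner_lincombl; apply: eq_bigr => i _; rewrite !mxE.
Qed.

Lemma singval_tr (R : realType) m n (T : 'M[R]_(m, n)) s : singval T^T s -> singval T s.
Proof. by rewrite /singval !trmxK => -[? []]. Qed.

Section TwoFamilies.
Variables (R : realType) (X : finType) (pi : X -> R).
Hypothesis pi_gt0 : forall x, 0 < pi x.
Variables (k1 k2 : nat) (e : 'I_k1 -> X -> R) (u : 'I_k2 -> X -> R).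
Hypothesis e_orthonormal : forall i j, inner pi (e i) (e j) = (i == j)%:R.
Hypothesis u_orthonormal : forall i j, inner pi (u i) (u j) = (i == j)%:R.
Local Notation inner := (inner pi).
Local Notation T := (gram pi e u).
Local Notation B := (T^T *m T).
Local Notation S1 := (lspan pi e).
Local Notation S2 := (lspan pi u).

Lemma gram_sym : B^T = B.
Proof. by rewrite trmx_mul trmxK. Qed.

Lemma inner_oproj_lincomb a :
  inner (oproj pi u (lincomb e a)) (oproj pi u (lincomb e a)) = rdot (a *m B) a.
Proof.
by rewrite /oproj coords_lincomb_gram inner_lincomb // mulmxA [RHS]rdot_mulmx.
Qed.

Lemma oproj_oproj_lincomb a :
  oproj pi e (oproj pi u (lincomb e a)) = lincomb e (a *m B).
Proof.
rewrite {2}/oproj coords_lincomb_gram /oproj coords_lincomb_gram.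
by rewrite gram_tr trmxK mulmxA.
Qed.

Lemma gram_eigen_range (v : 'rV_k1) lam :
  v != 0 -> v *m B = lam *: v -> 0 <= lam <= 1.
Proof.
move=> v0 vB; have vv : 0 < rdot v v by rewrite rdot_gt0.
have := bessel u_orthonormal pi_gt0 (lincomb e v).
have := inner_ge0 pi_gt0 (oproj pi u (lincomb e v)).
rewrite inner_oproj_lincomb inner_lincomb // vB rdotZl => lam_ge0 lam_le1.
by rewrite -(pmulr_lge0 _ vv) lam_ge0 -(ler_pM2r vv) mul1r.
Qed.

Lemma gram_eigen_singval (v : 'rV_k1) lam :
  v != 0 -> v *m B = lam *: v -> 0 < lam -> singval T (Num.sqrt lam).
Proof.
move=> v0 vB lam_gt0; split; first exact: sqrtr_ge0.
rewrite sqr_sqrtr ?ltW //; split; last by apply/eigenvalueP; exists v.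
apply/eigenvalueP; exists (v *m T^T); first by rewrite mulmxA -(mulmxA v) vB scalemxAl.
apply: contraNneq v0 => vT0.
have : v *m B = 0 by rewrite mulmxA vT0 mul0mx.
by rewrite vB => /eqP; rewrite scaler_eq0 (gt_eqF lam_gt0).
Qed.

Lemma inner_lincomb_gram_cap a g :
  (S1 `&` S2) g -> inner (lincomb e (a *m B)) g = inner (lincomb e a) g.
Proof.
case=> gS1 gS2; rewrite -oproj_oproj_lincomb !oproj_sym.
by rewrite (oproj_id e_orthonormal gS1) (oproj_id u_orthonormal gS2).
Qed.

Lemma lincomb_eigen1_cap (v : 'rV_k1) : v *m B = v -> (S1 `&` S2) (lincomb e v).
Proof.
move=> vB; split; first exact: lspan_lincomb.
exists (lincomb e v); apply/esym/(oproj_eq_norm u_orthonormal pi_gt0).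
by rewrite inner_oproj_lincomb vB inner_lincomb.
Qed.

Lemma coords_orth_cap_sub_kermx f :
  S1 f -> orth pi (S1 `&` S2) f -> (coords pi e f <= kermx (eigenspace B 1)^T)%MS.
Proof.
move=> fS1 fo; set a := coords pi e f; set E := eigenspace B 1.
have fE : f = lincomb e a := esym (oproj_id e_orthonormal fS1).
have /eigenspaceP EB := submx_refl E.
rewrite sub_kermx; apply/eqP/rowP => j.
have rowjB : row j E *m B = row j E by rewrite -row_mul EB scale1r.
rewrite [RHS]mxE -[RHS](fo _ (lincomb_eigen1_cap rowjB)) fE inner_lincomb // rdotE !mxE.
by apply: eq_bigr => i _; rewrite !mxE.
Qed.

Section SecondSingularValue.
Variable s : R.
Hypotheses (s_ge0 : 0 <= s) (s_max : forall s', singval T s' -> s' < 1 -> s' <= s).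

Lemma rayleigh_orth_eigen1 (a : 'rV_k1) :
  (a <= kermx (eigenspace B 1)^T)%MS -> rdot (a *m B) a <= s ^+ 2 * rdot a a.
Proof.
move=> aW; apply: (stable_rayleigh_le gram_sym (stablemx_kermx_eigenspace gram_sym 1) _ aW).
move=> v lam vW v0 vB; have /andP[lam_ge0 lam_le1] := gram_eigen_range v0 vB.
have lam_neq1 : lam != 1.
  apply: contra_neq v0 => lam1; apply: sub_kermx_tr_eq0 vW.
  by apply/eigenspaceP; rewrite -lam1.
have [->|lam_neq0] := eqVneq lam 0; first exact: sqr_ge0.
have lam_gt0 : 0 < lam by rewrite lt_def lam_neq0.
have sqrt_lt1 : Num.sqrt lam < 1 by rewrite -sqrtr1 ltr_sqrt // lt_neqAle lam_neq1.
have := s_max (gram_eigen_singval v0 vB lam_gt0) sqrt_lt1.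
by rewrite -{2}(sqr_sqrtr lam_ge0); apply: lerXn2r; rewrite ?nnegrE ?sqrtr_ge0.
Qed.

Lemma cosine_le_sigma2 f h : cosine_pair pi S1 S2 f h -> inner f h <= s.
Proof.
move=> [[fS1 fo] [hS2 _]]; rewrite !normpi_le1 => nf nh.
have fE : f = lincomb e (coords pi e f) := esym (oproj_id e_orthonormal fS1).
have Puf : inner (oproj pi u f) (oproj pi u f) <= s ^+ 2.
  rewrite fE inner_oproj_lincomb; apply: le_trans (rayleigh_orth_eigen1 _) _.
    exact: coords_orth_cap_sub_kermx.
  by rewrite -(inner_lincomb e_orthonormal) -fE ler_piMr ?sqr_ge0.
have fh2 : inner f h ^+ 2 <= s ^+ 2.
  rewrite -(oproj_id u_orthonormal hS2) -oproj_sym -[s ^+ 2]mulr1.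
  apply: le_trans (inner_cauchy_schwarz pi_gt0 _ _) _.
  exact: ler_pM (inner_ge0 pi_gt0 _) (inner_ge0 pi_gt0 _) Puf nh.
have [fh_le0|fh_gt0] := lerP (inner f h) 0; first exact: le_trans fh_le0 s_ge0.
by rewrite -ler_sqr ?nnegrE ?(ltW fh_gt0).
Qed.

End SecondSingularValue.

Lemma cosine_attained s : singval T s -> 0 < s < 1 ->
  exists f h, cosine_pair pi S1 S2 f h /\ inner f h = s.
Proof.
move=> [_ [_ /eigenvalueP [a0 a0B a0_neq0]]] /andP[s_gt0 s_lt1].
have a0a0 : 0 < rdot a0 a0 by rewrite rdot_gt0.
pose a := (Num.sqrt (rdot a0 a0))^-1 *: a0.
have aa : rdot a a = 1.
  by rewrite rdotZl rdotZr mulrA -expr2 exprVn sqr_sqrtr ?ltW // mulVf // gt_eqF.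
have aB : a *m B = s ^+ 2 *: a by rewrite -scalemxAl a0B !scalerA mulrC.
pose f := lincomb e a; pose g := oproj pi u f; pose h x := s^-1 * g x.
have gg : inner g g = s ^+ 2 by rewrite inner_oproj_lincomb aB rdotZl aa mulr1.
have fg : inner f g = s ^+ 2.
  by rewrite -gg {2}/g oproj_sym (oproj_id u_orthonormal (lspan_oproj u_orthonormal _)).
have fo c : (S1 `&` S2) c -> inner f c = 0.
  move=> cS; have := inner_lincomb_gram_cap a cS; rewrite aB lincombZ innerZl.
  move=> /(congr1 (fun r => r - inner f c)); rewrite subrr -{2}[inner f c]mul1r -mulrBl.
  by move/eqP; rewrite mulf_eq0 subr_eq0 => /orP[/eqP s2_1|/eqP //]; nra.
have hS2 : S2 h by rewrite /h /g /oproj -lincombZ; exact: lspan_lincomb.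
exists f, h; split; last by rewrite innerZr fg expr2 mulKf ?gt_eqF.
split; rewrite ?normpi_le1.
- by split=> [|c /fo]; first exact: lspan_lincomb.
- split=> // c [cS1 cS2].
  by rewrite innerZl oproj_sym (oproj_id u_orthonormal cS2) fo ?mulr0.
- by rewrite inner_lincomb // aa.
- by rewrite innerZl innerZr gg mulrA -expr2 exprVn mulVf // expf_neq0 // gt_eqF.
Qed.

Lemma cosine_gram s : singval T s -> s < 1 ->
  (forall s', singval T s' -> s' < 1 -> s' <= s) -> cosine pi S1 S2 = s.
Proof.
move=> sv s_lt1 s_max; have le_s := cosine_le_sigma2 sv.1 s_max.
have [s0|s_neq0] := eqVneq s 0.
  rewrite s0 in le_s *.
  exact: cosine_eq_max (cosine_pair0 pi (lspan0 pi e) (lspan0 pi u)) (inner0l pi _) le_s.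
have s_gt0 : 0 < s by rewrite lt_def s_neq0 sv.1.
have [f [h [fh fhs]]] := cosine_attained sv (introT andP (conj s_gt0 s_lt1)).
exact: cosine_eq_max fh fhs le_s.
Qed.

Lemma gram_rayleigh_eq : ~~ eigenvalue B 0 -> (forall s, singval T s -> s = 1) ->
  forall a, rdot (a *m B) a = rdot a a.
Proof.
move=> B0 sv1 a.
have eig1 (v : 'rV_k1) lam : v != 0 -> v *m B = lam *: v -> lam = 1.
  move=> v0 vB; have /andP[lam_ge0 _] := gram_eigen_range v0 vB.
  have [lam0|lam_neq0] := eqVneq lam 0.
    by move: B0; rewrite -lam0; case/negP; apply/eigenvalueP; exists v.
  have lam_gt0 : 0 < lam by rewrite lt_def lam_neq0.
  by rewrite -(sqr_sqrtr lam_ge0) (sv1 _ (gram_eigen_singval v0 vB lam_gt0)) expr1n.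
have stable1 (M : 'M[R]_k1) : stablemx 1%:M M by exact: submx1.
apply/le_anti/andP; split.
  rewrite -[leRHS]mul1r; apply: (stable_rayleigh_le gram_sym (stable1 _)) (submx1 _).
  by move=> v lam _ v0 /(eig1 _ _ v0) ->.
have NBsym : (- B)^T = - B by rewrite linearN /= gram_sym.
suff : rdot (a *m - B) a <= -1 * rdot a a by rewrite mulmxN rdotNl mulN1r lerN2.
apply: (stable_rayleigh_le NBsym (stable1 _)) (submx1 _) => v lam _ v0.
rewrite mulmxN => /eqP; rewrite eqr_oppLR -scaleNr => /eqP /(eig1 _ _ v0) /eqP.
by rewrite eqr_oppLR => /eqP ->.
Qed.

Lemma lspan_sub_gram : ~~ eigenvalue B 0 -> (forall s, singval T s -> s = 1) -> S1 `<=` S2.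
Proof.
move=> B0 sv1 f fS1; exists f; apply/esym/(oproj_eq_norm u_orthonormal pi_gt0).
have fE : f = lincomb e (coords pi e f) := esym (oproj_id e_orthonormal fS1).
by rewrite fE inner_oproj_lincomb gram_rayleigh_eq // inner_lincomb.
Qed.

Lemma cosine_oproj_nested : S1 `<=` S2 ->
  cosine pi S1 S2 = 0 /\
  forall G, is_orth_proj pi (S1 `&` S2) G ->
    (forall f, oproj pi e (oproj pi u f) = G f) /\
    (forall f, oproj pi u (oproj pi e f) = G f).
Proof.
move=> S12; split; first exact: cosine_eq0_sub (lspan0 pi e) (lspan0 pi u) S12.
move=> G; rewrite setIidl // => /(oproj_unique e_orthonormal pi_gt0) GE.
split=> f; rewrite GE; last exact/(oproj_id u_orthonormal)/S12/lspan_oproj.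
apply: (inner_ext pi_gt0) => g; rewrite !oproj_sym.
by rewrite (oproj_id u_orthonormal (S12 _ (lspan_oproj e_orthonormal g))).
Qed.

End TwoFamilies.

Lemma lspan_nested_gram (R : realType) (X : finType) (pi : X -> R)
  (pi_gt0 : forall x, 0 < pi x) k1 k2 (e : 'I_k1 -> X -> R) (u : 'I_k2 -> X -> R)
  (e_orthonormal : forall i j, inner pi (e i) (e j) = (i == j)%:R)
  (u_orthonormal : forall i j, inner pi (u i) (u j) = (i == j)%:R) :
  (forall s, singval (gram pi e u) s -> s = 1) ->
  lspan pi e `<=` lspan pi u \/ lspan pi u `<=` lspan pi e.
Proof.
move=> sv1; set T := gram pi e u.
have [B0|B0] := boolP (eigenvalue (T^T *m T) 0); last by left; exact: lspan_sub_gram.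
right; apply: lspan_sub_gram => //; last first.
  by move=> s; rewrite gram_tr => /singval_tr /sv1.
rewrite gram_tr trmxK; apply/negP => BT0.
have : singval T 0 by rewrite /singval expr0n.
by move/sv1/eqP; rewrite eq_sym oner_eq0.
Qed.

Lemma cosine_oproj_singval1 (R : realType) (X : finType) (pi : X -> R)
  (pi_gt0 : forall x, 0 < pi x) k1 k2 (e : 'I_k1 -> X -> R) (u : 'I_k2 -> X -> R)
  (e_orthonormal : forall i j, inner pi (e i) (e j) = (i == j)%:R)
  (u_orthonormal : forall i j, inner pi (u i) (u j) = (i == j)%:R) :
  (forall s, singval (gram pi e u) s -> s = 1) ->
  cosine pi (lspan pi e) (lspan pi u) = 0 /\
  forall G, is_orth_proj pi (lspan pi e `&` lspan pi u) G ->
    (forall f, oproj pi e (oproj pi u f) = G f) /\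
    (forall f, oproj pi u (oproj pi e f) = G f).
Proof.
move=> sv1; have [S12|S21] := lspan_nested_gram pi_gt0 e_orthonormal u_orthonormal sv1.
  exact: cosine_oproj_nested.
have [cos0 PG] := cosine_oproj_nested pi_gt0 u_orthonormal e_orthonormal S21.
split; first by rewrite cosineC.
by move=> G; rewrite setIC => /PG[].
Qed.

Lemma piA_gt0 (R : realType) (X : finType) (pi : X -> R) (A : {set X}) x :
  (forall x, 0 < pi x) -> x \in A -> 0 < piA pi A.
Proof.
move=> pi_gt0 xA; rewrite /piA (bigD1 x) //= ltr_pwDl ?pi_gt0 //.
by rewrite sumr_ge0 // => y _; rewrite ltW.
Qed.

Section OrbitBasis.
Variables (R : realType) (X : finType) (pi : X -> R).
Hypothesis pi_gt0 : forall x, 0 < pi x.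
Variables (gT : finGroupType) (to : {action gT &-> X}).

Definition orbit_enum (i : 'I_#|orbits to|) : {set X} := @enum_val _ (mem (orbits to)) i.

Definition orbit_basis (i : 'I_#|orbits to|) : X -> R :=
  fun x => if x \in orbit_enum i then (Num.sqrt (piA pi (orbit_enum i)))^-1 else 0.

Lemma orbit_enumE i x : x \in orbit_enum i -> orbit_enum i = orb to x.
Proof.
rewrite /orbit_enum; have /imsetP[y _ ->] := enum_valP i.
by rewrite /orb => /orbit_eqP ->.
Qed.

Lemma orbit_enum_inj i j x : x \in orbit_enum i -> x \in orbit_enum j -> i = j.
Proof.
move=> /orbit_enumE xi /orbit_enumE xj.
by apply: enum_val_inj; rewrite -!/(orbit_enum _) xi xj.
Qed.

Lemma orbit_enum_mem x : exists i, x \in orbit_enum i.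
Proof.
have Ox : orb to x \in orbits to by apply: imset_f.
exists (enum_rank_in Ox (orb to x)); rewrite /orbit_enum enum_rankK_in //.
exact: orbit_refl.
Qed.

Lemma piA_orbit_enum_gt0 i : 0 < piA pi (orbit_enum i).
Proof.
have /imsetP[y _ Ey] := enum_valP i.
by apply: (piA_gt0 (x := y)) => //; rewrite /orbit_enum Ey orbit_refl.
Qed.

Lemma orbit_basis_orthonormal i j :
  inner pi (orbit_basis i) (orbit_basis j) = (i == j)%:R.
Proof.
have [<-|ij] := eqVneq i j; last first.
  rewrite /inner big1 // => x _; rewrite /orbit_basis.
  case: ifP => xi; case: ifP => xj; rewrite ?mulr0 ?mul0r //.
  by rewrite (orbit_enum_inj xi xj) eqxx in ij.
have p_gt0 := piA_orbit_enum_gt0 i.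
rewrite /inner (bigID (mem (orbit_enum i))) /= [X in _ + X]big1 ?addr0; last first.
  by move=> x /negbTE xi; rewrite /orbit_basis xi !mul0r.
rewrite -[1](mulfV (lt0r_neq0 p_gt0)) /piA mulr_suml.
apply: eq_bigr => x xi; rewrite /orbit_basis xi -expr2 exprVn sqr_sqrtr ?ltW //.
by rewrite mulrC.
Qed.

Lemma kop_gibbs : kop (gibbs pi to) = oproj pi orbit_basis.
Proof.
apply: funext => f; apply: funext => x; have [i xi] := orbit_enum_mem x.
rewrite /oproj /lincomb (bigD1 i) //= big1 ?addr0 => [|j ji]; last first.
  rewrite /orbit_basis; case: ifP => xj; last by rewrite mulr0.
  by rewrite (orbit_enum_inj xj xi) eqxx in ji.
rewrite mxE /inner /kop /gibbs /orbit_basis xi -(orbit_enumE xi) mulr_suml.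
have p_gt0 := piA_orbit_enum_gt0 i.
apply: eq_bigr => y _; case: ifP => _; last by rewrite mulr0 !mul0r.
rewrite -{1}(sqr_sqrtr (ltW p_gt0)); field.
by rewrite gt_eqF // sqrtr_gt0.
Qed.

End OrbitBasis.

Arguments orbit_basis {R X} pi {gT} to i.

Lemma Tmat_gram (R : realType) (X : finType) (pi : X -> R) (pi_gt0 : forall x, 0 < pi x)
  (gT1 gT2 : finGroupType) (to1 : {action gT1 &-> X}) (to2 : {action gT2 &-> X}) :
  Tmat pi to1 to2 = gram pi (orbit_basis pi to1) (orbit_basis pi to2).
Proof.
apply/matrixP => j i; rewrite !mxE /= -/(orbit_enum i) -/(orbit_enum j).
have p1 := piA_orbit_enum_gt0 pi_gt0 i; have p2 := piA_orbit_enum_gt0 pi_gt0 j.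
rewrite sqrtrM ?ltW // invfM /piA mulr_suml big_mkcond /=; apply: eq_bigr => x _.
rewrite /orbit_basis inE.
by case: (x \in orbit_enum i); case: (x \in orbit_enum j); rewrite ?mulr0 ?mul0r //; ring.
Qed.

Theorem proposition8p6 (R : realType) (X : finType) (pi : X -> R)
  (gT1 gT2 : finGroupType) (to1 : {action gT1 &-> X}) (to2 : {action gT2 &-> X}) :
  (forall x, 0 < pi x) -> \sum_x pi x = 1 ->
  let S1 := range_sp (gibbs pi to1) in
  let S2 := range_sp (gibbs pi to2) in
  let T := Tmat pi to1 to2 in
  (forall s, singval T s -> s < 1 ->
     (forall s', singval T s' -> s' < 1 -> s' <= s) ->
     cosine pi S1 S2 = s) /\
  ((forall s, singval T s -> s = 1) ->
     cosine pi S1 S2 = 0 /\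
     forall Ginf : (X -> R) -> (X -> R), is_orth_proj pi (S1 `&` S2) Ginf ->
       (forall f, kop (gibbs pi to1) (kop (gibbs pi to2) f) = Ginf f) /\
       (forall f, kop (gibbs pi to2) (kop (gibbs pi to1) f) = Ginf f)).
Proof.
move=> pi_gt0 _ S1 S2 T.
rewrite {}/S1 {}/S2 {}/T /range_sp !(kop_gibbs pi_gt0) (Tmat_gram pi_gt0).
have e_orthonormal := orbit_basis_orthonormal pi_gt0 (to := to1).
have u_orthonormal := orbit_basis_orthonormal pi_gt0 (to := to2).
split; first exact: cosine_gram.
exact: cosine_oproj_singval1.
Qed.
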